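(* Let $E$ be the group with presentation $\langle t,u,v\mid t^2=1,\ u^2=v^2,\ tut^{-1}=u^{-1},\ tv=vt,\ uv=vu\rangle$, and let $\{T,U,V\}$ be the basis of $H^1(E;\mathbb{F}_2)$ dual to the images of $t,u,v$ in $H_1(E;\mathbb{F}_2)$. Then $TU+U^2+V^2=0$ in $H^2(E;\mathbb{F}_2)$.
   Context: Products are cup products. *)

From HB Require Import structures.
From mathcomp Require Import all_boot all_order all_algebra.
Set Implicit Arguments. Unset Strict Implicit. Unset Printing Implicit Defensive.
Import GRing.Theory.
Local Open Scope ring_scope.

Structure grp := Grp {
  gcar :> Type;
  gmul : gcar -> gcar -> gcar;
  gone : gcar;
  ginv : gcar -> gcar;
  gmulA : forall x y z, gmul x (gmul y z) = gmul (gmul x y) z;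
  gmul1 : forall x, gmul gone x = x;
  gmulV : forall x, gmul (ginv x) x = gone
}.

Definition ghom (G H : grp) (f : G -> H) : Prop :=
  forall x y, f (gmul x y) = gmul (f x) (f y).

Definition E_relations (G : grp) (t u v : G) : Prop :=
  [/\ gmul t t = gone G,
      gmul u u = gmul v v,
      gmul (gmul t u) (ginv t) = ginv u,
      gmul t v = gmul v t
    & gmul u v = gmul v u].

(* (G; t, u, v) is the group with presentation
   < t, u, v | t^2 = 1, u^2 = v^2, t u t^-1 = u^-1, t v = v t, u v = v u >,
   i.e. it satisfies the universal property of the presented group. *)
Definition is_E_presentation (G : grp) (t u v : G) : Prop :=
  E_relations t u v /\
  forall (H : grp) (a b c : H), E_relations a b c ->
    exists f : G -> H,
      [/\ ghom f, f t = a, f u = b, f v = c &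
          forall g : G -> H, ghom g -> g t = a -> g u = b -> g v = c ->
            forall x, g x = f x].

(* Group cohomology with trivial coefficients F_2, via inhomogeneous cochains. *)
(* 1-cocycles (= H^1, since 1-coboundaries vanish for trivial coefficients). *)
Definition cocycle1 (G : grp) (a : G -> 'F_2) : Prop :=
  forall g h, a (gmul g h) = a g + a h.

Definition cup11 (G : grp) (a b : G -> 'F_2) : G -> G -> 'F_2 :=
  fun g h => a g * b h.

Definition coboundary2 (G : grp) (c : G -> G -> 'F_2) : Prop :=
  exists f : G -> 'F_2, forall g h, c g h = f h - f (gmul g h) + f g.

Definition H2_class_zero (G : grp) (c : G -> G -> 'F_2) : Prop := coboundary2 c.

(* A normalized 2-cocycle c : E -> E -> A defines a central extension
   E x_c A -> E, and c is a coboundary as soon as this projection has a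
   homomorphic section.  For the presented group E such a section exists
   whenever t, u, v lift to elements satisfying the defining relations; for
   c = TU + U^2 + V^2 the lifts (t,0), (u,0), (v,0) do, because c takes equal
   values on (u,u) and (v,v), vanishes on the pairs entering t^2 = 1 and the
   two commutation relations, and both t u t^-1 and u^-1 lift with second
   coordinate 1 = c(t,u) = c(u^-1,u). *)

From mathcomp Require Import all_boot all_order all_algebra.
From mathcomp Require Import ring.
Local Open Scope ring_scope.
Set Implicit Arguments.
Unset Strict Implicit.
Unset Printing Implicit Defensive.
Import GRing.Theory.

Section CentralExtension.
Variables (G : grp) (A : zmodType) (c : G -> G -> A).

Definition cocycle2 := forall g h k,
  c h k + c g (gmul h k) = c (gmul g h) k + c g h.

Hypotheses (c_cocycle : cocycle2) (c11 : c (gone G) (gone G) = 0).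

Lemma cocycle2_1l k : c (gone G) k = 0.
Proof.
by have := c_cocycle (gone G) (gone G) k; rewrite !gmul1 c11; apply: addrI.
Qed.

Definition ext_mul (x y : G * A) : G * A :=
  (gmul x.1 y.1, x.2 + y.2 + c x.1 y.1).
Definition ext_one : G * A := (gone G, 0).
Definition ext_inv (x : G * A) : G * A := (ginv x.1, - x.2 - c (ginv x.1) x.1).

Lemma ext_mulA x y z : ext_mul x (ext_mul y z) = ext_mul (ext_mul x y) z.
Proof.
case: x y z => [g a] [h b] [k d]; rewrite /ext_mul /= gmulA; congr pair.
rewrite -!addrA; congr (a + (b + _)).
by rewrite (c_cocycle g h k) [_ + c g h]addrC addrCA.
Qed.

Lemma ext_mul1 x : ext_mul ext_one x = x.
Proof.
by case: x => g a; rewrite /ext_mul /= gmul1 cocycle2_1l add0r addr0.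
Qed.

Lemma ext_mulV x : ext_mul (ext_inv x) x = ext_one.
Proof.
case: x => g a; rewrite /ext_mul /= gmulV; congr pair.
by rewrite [- a - _ + a]addrAC addNr add0r addNr.
Qed.

Definition ext : grp := Grp ext_mulA ext_mul1 ext_mulV.

Lemma ext_fst_hom : ghom (fun x : ext => x.1).
Proof. by []. Qed.

Lemma ext_section_coboundary (s : G -> ext) :
  ghom s -> (forall g, (s g).1 = g) ->
  exists f : G -> A, forall g h, c g h = f h - f (gmul g h) + f g.
Proof.
move=> s_hom s_sect; exists (fun g => - (s g).2) => g h.
rewrite s_hom /= /ext_mul /= !s_sect.
rewrite opprK [(s g).2 + _]addrC -[(s h).2 + _ + _]addrA (addKr (s h).2).
by rewrite [_ + c g h]addrC addrK.
Qed.

End CentralExtension.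

Lemma cocycle2D (G : grp) (A : zmodType) (c1 c2 : G -> G -> A) :
  cocycle2 c1 -> cocycle2 c2 -> cocycle2 (fun g h => c1 g h + c2 g h).
Proof. by move=> h1 h2 g h k; rewrite addrACA h1 h2 addrACA. Qed.

Lemma presentation_section (E H : grp) (t u v : E) (p : H -> E) (a b c : H) :
  is_E_presentation t u v -> ghom p -> E_relations a b c ->
  p a = t -> p b = u -> p c = v ->
  exists2 s : E -> H, ghom s & forall x, p (s x) = x.
Proof.
move=> [Erel univ] p_hom abc pa pb pc.
have [s [s_hom sa sb sc _]] := univ H a b c abc.
have [f0 [_ _ _ _ f0_unique]] := univ E t u v Erel.
have id_f0 x : x = f0 x by apply: f0_unique.
have ps_f0 x : p (s x) = f0 x.
  apply: (f0_unique (fun y => p (s y))) => [y z|||] /=;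
  by rewrite ?s_hom ?sa ?sb ?sc.
by exists s => // x; rewrite ps_f0 -id_f0.
Qed.

Section F2Cochains.
Variable G : grp.

Lemma F2_pchar : 2 \in [pchar 'F_2].
Proof. exact: pchar_Fp. Qed.

Lemma cocycle1_gone (a : G -> 'F_2) : cocycle1 a -> a (gone G) = 0.
Proof.
move=> ha; have := ha (gone G) (gone G).
by rewrite gmul1 -{1}[a _]addr0 => /addrI.
Qed.

Lemma cocycle1_ginv (a : G -> 'F_2) g : cocycle1 a -> a (ginv g) = a g.
Proof.
move=> ha; have := ha (ginv g) g; rewrite gmulV cocycle1_gone //.
by move/esym/eqP; rewrite addr_eq0 (oppr_pchar2 F2_pchar) => /eqP.
Qed.

Lemma cup11_cocycle2 (a b : G -> 'F_2) :
  cocycle1 a -> cocycle1 b -> cocycle2 (cup11 a b).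
Proof. by move=> ha hb g h k; rewrite /cup11 ha hb; ring. Qed.

Lemma cup11_gone (a b : G -> 'F_2) :
  cocycle1 a -> cup11 a b (gone G) (gone G) = 0.
Proof. by move=> ha; rewrite /cup11 cocycle1_gone ?mul0r. Qed.

End F2Cochains.

Section CupLifts.
Variables (E : grp) (t u v : E) (T U V : E -> 'F_2).
Hypotheses (hT : cocycle1 T) (hU : cocycle1 U) (hV : cocycle1 V).
Hypotheses (Tt : T t = 1) (Tu : T u = 0) (Tv : T v = 0).
Hypotheses (Ut : U t = 0) (Uu : U u = 1) (Uv : U v = 0).
Hypotheses (Vt : V t = 0) (Vu : V u = 0) (Vv : V v = 1).

Definition cup_TU_UU_VV (g h : E) : 'F_2 :=
  cup11 T U g h + cup11 U U g h + cup11 V V g h.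

Lemma cup_TU_UU_VV_cocycle2 : cocycle2 cup_TU_UU_VV.
Proof. by do 2?apply: cocycle2D; apply: cup11_cocycle2. Qed.

Lemma cup_TU_UU_VV_gone : cup_TU_UU_VV (gone E) (gone E) = 0.
Proof. by rewrite /cup_TU_UU_VV !cup11_gone // !addr0. Qed.

Definition cup_ext : grp := ext cup_TU_UU_VV_cocycle2 cup_TU_UU_VV_gone.

Lemma cup_lifts_E_relations :
  E_relations t u v -> @E_relations cup_ext (t, 0) (u, 0) (v, 0).
Proof.
case=> e1 e2 e3 e4 e5.
rewrite /E_relations /= /ext_mul /ext_inv /cup_TU_UU_VV /cup11 /=.
rewrite e1 e2 e3 e4 e5 !(hT, hU, hV).
rewrite !(cocycle1_ginv _ hT, cocycle1_ginv _ hU, cocycle1_ginv _ hV).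
by rewrite Tt Tu Tv Ut Uu Uv Vt Vu Vv; split; congr pair; apply/eqP.
Qed.

End CupLifts.

Theorem lemma6 (E : grp) (t u v : E) (T U V : E -> 'F_2) :
  is_E_presentation t u v ->
  cocycle1 T -> cocycle1 U -> cocycle1 V ->
  T t = 1 -> T u = 0 -> T v = 0 ->
  U t = 0 -> U u = 1 -> U v = 0 ->
  V t = 0 -> V u = 0 -> V v = 1 ->
  H2_class_zero (fun g h => cup11 T U g h + cup11 U U g h + cup11 V V g h).
Proof.
move=> pres hT hU hV Tt Tu Tv Ut Uu Uv Vt Vu Vv.
have lifts := cup_lifts_E_relations hT hU hV Tt Tu Tv Ut Uu Uv Vt Vu Vv pres.1.
have [s s_hom s_sect] :=
  presentation_section pres (@ext_fst_hom _ _ _ _ _) lifts erefl erefl erefl.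
exact: ext_section_coboundary s_hom s_sect.
Qed.
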